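(* For all integers $L\ge1$ and $M\ge L+1$, $$\sigma_{\min}\Big(\frac{\bar B}{\sqrt M}\Big)\ge\frac{1}{L^2\,2^{7L}(2L+1)}\left(\frac{M+L}{eM}\right)^{L+0.5}.$$
   Context: $\bar B$ is the $M\times(L+1)$ real Vandermonde matrix with entries $\bar B_{i,j}=(i/M)^{j}$ for $1\le i\le M$, $0\le j\le L$ (so its first column is all ones). $\sigma_{\min}$ denotes the smallest singular value. *)

From HB Require Import structures.
From mathcomp Require Import all_boot all_order all_algebra.
From mathcomp Require Import all_classical all_reals all_analysis.
Set Implicit Arguments. Unset Strict Implicit. Unset Printing Implicit Defensive.
Import Order.TTheory GRing.Theory Num.Theory.
Local Open Scope ring_scope.
Local Open Scope classical_set_scope.

Definition sigma_min (R : realType) (m n : nat) (A : 'M[R]_(m, n)) : R :=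
  Num.sqrt (inf [set a : R | eigenvalue (A^T *m A) a]).

(* The M x (L+1) Vandermonde matrix Bbar_{i,j} = (i/M)^j, 1 <= i <= M, 0 <= j <= L
   (row index i0 : 'I_M stands for i = i0+1). *)
Definition Bbar (R : realType) (M L : nat) : 'M[R]_(M, L.+1) :=
  \matrix_(i < M, j < L.+1) (((i : nat).+1)%:R / M%:R) ^+ (j : nat).

From mathcomp Require Import all_boot all_order all_algebra.
From mathcomp Require Import all_classical all_reals all_analysis.
From mathcomp Require Import complex ring lra zify.
Import Order.TTheory GRing.Theory Num.Theory.
Local Open Scope ring_scope.

(* The square of sigma_min (Bbar / sqrt M) is the least eigenvalue of the Gram
   matrix, i.e. the least value of (1/M) sum_i p(i/M)^2 / |v|^2, where p is the
   polynomial of degree <= L with coefficient vector v.  Split the M sample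
   points into q = M %/ (L+1) interleaved grids of L+1 equispaced points with
   step h = q/M.  Lagrange interpolation on one grid bounds every coefficient of
   p by 2^(2L+1) / (h^L L!) times the l1-norm of the samples of p on the grid;
   summing the resulting l2 estimate over the q grids and using
   (L+1)^L <= e^L L! gives
   M |v|^2 <= 8 (L+1)^3 64^L e^(2L) sum_i p(i/M)^2,
   and the constant of the theorem is below the inverse square root of
   8 (L+1)^3 64^L e^(2L). *)

Lemma hermitian_eigenvalue_real {C : numClosedFieldType} {n} {A : 'M[C]_n} {a : C} :
  map_mx Num.conj A^T = A -> eigenvalue A a -> a \is Num.real.
Proof.
move=> Aherm /eigenvalueP [v vA vN0].
have conj_av : map_mx Num.conj (a *: v)^T = a^* *: map_mx Num.conj v^T.
  by apply/matrixP => i j; rewrite !mxE rmorphM.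
have : v *m A *m map_mx Num.conj v^T = v *m map_mx Num.conj (v *m A)^T.
  by rewrite trmx_mul map_mxM Aherm mulmxA.
rewrite vA conj_av -scalemxAl -scalemxAr => /matrixP /(_ 0 0).
rewrite [LHS]mxE [RHS]mxE -dotmxE => /mulIf.
by rewrite dnorm_eq0 vN0 => /(_ isT) /esym /CrealP.
Qed.

Lemma symmetric_eigenvalue_exists (R : rcfType) n (G : 'M[R]_n.+1) :
  G^T = G -> exists a, eigenvalue G a.
Proof.
move=> Gsym; pose Gc := map_mx (real_complex R) G.
have [l l_eig] := eigenvalue_closed Gc (ltn0Sn n).
have Gc_herm : map_mx Num.conj Gc^T = Gc.
  apply/matrixP => i j; rewrite !mxE conj_Creal; last by apply/complex_realP; eexists.
  by rewrite -[in LHS]Gsym mxE.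
have /complex_realP [r lE] := hermitian_eigenvalue_real Gc_herm l_eig.
by exists r; move: l_eig; rewrite lE eigenvalue_map.
Qed.

Lemma mulmx_row_trmx (R : pzSemiRingType) n (v : 'rV[R]_n) :
  (v *m v^T) 0 0 = \sum_j v 0 j ^+ 2.
Proof. by rewrite mxE; apply: eq_bigr => j _; rewrite mxE. Qed.

Lemma sum_sqr_row_gt0 (R : realDomainType) n (v : 'rV[R]_n) :
  v != 0 -> 0 < \sum_j v 0 j ^+ 2.
Proof.
move=> vN0; have [j vj] : exists j, v 0 j != 0.
  apply/existsP; apply: contraNT vN0; rewrite negb_exists => /forallP v0.
  by apply/eqP/rowP => j; rewrite mxE; apply/eqP/negPn/v0.
rewrite (bigD1 j) //= ltr_pwDl ?sumr_ge0 // => [|k _]; last exact: sqr_ge0.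
by rewrite lt_def sqr_ge0 sqrf_eq0 vj.
Qed.

Lemma sigma_min_ge (R : realType) m n (A : 'M[R]_(m, n.+1)) c :
  0 <= c ->
  (forall v : 'rV_n.+1, c ^+ 2 * \sum_j v 0 j ^+ 2 <= \sum_i (v *m A^T) 0 i ^+ 2) ->
  c <= sigma_min A.
Proof.
move=> c_ge0 A_bound.
have eig_ge a : eigenvalue (A^T *m A) a -> c ^+ 2 <= a.
  move=> /eigenvalueP [v vG vN0].
  have : (v *m A^T) *m (v *m A^T)^T = a *: (v *m v^T).
    by rewrite trmx_mul trmxK !mulmxA -(mulmxA v) vG scalemxAl.
  move=> /matrixP /(_ 0 0); rewrite [RHS]mxE !mulmx_row_trmx => vAv.
  by have := A_bound v; rewrite vAv ler_pM2r // sum_sqr_row_gt0.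
have [a0 a0_eig] : exists a, eigenvalue (A^T *m A) a.
  by apply: symmetric_eigenvalue_exists; rewrite trmx_mul trmxK.
rewrite /sigma_min -(ger0_norm c_ge0) -sqrtr_sqr ler_wsqrtr //.
by apply: lb_le_inf => [|a /eig_ge]; first by exists a0.
Qed.

Lemma prod_dist_neq_fact (R : numDomainType) (n k : nat) : (k <= n)%N ->
  \prod_(m < n.+1 | m != k :> nat) `|k%:R - m%:R : R| = (k`! * (n - k)`!)%:R.
Proof.
move=> kn; rewrite -(big_mkord (fun m => m != k) (fun m => `|k%:R - m%:R|)).
rewrite big_mkcond (@big_cat_nat _ _ _ k) ?leqW //= (@big_ltn _ _ _ k) //.
rewrite eqxx mul1r natrM; congr (_ * _).
- rewrite (@eq_big_nat _ _ _ _ _ _ (fun m => (k - m)%:R)) => [|m /andP [_ mk]].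
    rewrite big_nat_rev fact_prod big_add1 natr_prod /=.
    by apply: eq_big_nat => m /andP [_ mk]; congr (_ %:R); lia.
  have km : (m <= k)%N by exact: ltnW.
  by rewrite ltn_eqF // -natrB // ger0_norm.
- rewrite (@eq_big_nat _ _ _ _ _ _ (fun m => (m - k)%:R)) => [|m /andP [km _]].
    rewrite -{1}(add0n k.+1) big_addn subSS fact_prod big_add1 natr_prod /=.
    by apply: eq_big_nat => m _; congr (_ %:R); lia.
  have km' : (k <= m)%N by exact: ltnW.
  by rewrite gtn_eqF // distrC -natrB // ger0_norm.
Qed.

Lemma bin_le_exp2 n k : ('C(n, k) <= 2 ^ n)%N.
Proof.
elim: n k => [|n IH] [|k] //; first by rewrite bin0 expn_gt0.
by rewrite binS expnS; have := IH k; have := IH k.+1; lia.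
Qed.

Lemma coef_prod_XsubC_le (R : numDomainType) (I : Type) (r : seq I) (P : pred I)
    (c : I -> R) :
  (forall i, `|c i| <= 1) ->
  forall j, `|(\prod_(i <- r | P i) ('X - (c i)%:P))`_j| <= 2 ^+ size r.
Proof.
move=> c_le1; elim: r => [|i r IH] j.
  by rewrite big_nil coef1 /=; case: (j == 0)%N; rewrite ?normr1 ?normr0.
rewrite big_cons /= exprS.
case: (P i); last by apply: le_trans (IH j) _; apply: ler_peMl; rewrite ?exprn_ge0 ?ler1n.
rewrite mulrBl coefB coefXM coefCM mulr2n mulrDl mul1r.
apply: le_trans (ler_normB _ _) (lerD _ _).
  by case: (j == 0)%N; rewrite ?normr0 ?exprn_ge0 ?IH.
by rewrite normrM -[leRHS]mul1r; apply: ler_pM; rewrite ?IH.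
Qed.

Lemma sqr_sum_norm_le {R : realDomainType} {I : finType} (F : I -> R) :
  (\sum_i `|F i|) ^+ 2 <= #|I|%:R * \sum_i F i ^+ 2.
Proof.
rewrite -(ler_pM2l (ltr0n R 2)).
have -> : 2 * (\sum_i `|F i|) ^+ 2 = \sum_i \sum_j 2 * (`|F i| * `|F j|).
  by rewrite expr2 big_distrlr mulr_sumr; apply: eq_bigr => i _; rewrite mulr_sumr.
have -> : 2 * (#|I|%:R * \sum_i F i ^+ 2) = \sum_i \sum_j (F i ^+ 2 + F j ^+ 2).
  under [RHS]eq_bigr do rewrite big_split /=.
  by rewrite big_split /= exchange_big /= sumr_const !mulr_natl mulr2n.
apply: ler_sum => i _; apply: ler_sum => j _.
rewrite -(real_normK (num_real (F i))) -(real_normK (num_real (F j))) -subr_ge0.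
by rewrite (_ : _ - _ = (`|F i| - `|F j|) ^+ 2) ?sqr_ge0 //; ring.
Qed.

Definition interpolation_constant {R : fieldType} (L : nat) (h : R) : R :=
  2 ^+ (2 * L + 1) / (h ^+ L * L`!%:R).

Lemma interpolation_constant_ge0 (R : numFieldType) (L : nat) (h : R) :
  0 < h -> 0 <= interpolation_constant L h.
Proof. by move=> h_gt0; rewrite divr_ge0 ?mulr_ge0 ?exprn_ge0 // ltW. Qed.

Section EquispacedInterpolation.
Context {R : realFieldType} {L : nat} {a h : R}.
Hypotheses (h_gt0 : 0 < h) (a_ge0 : 0 <= a) (nodes_le1 : a + L%:R * h <= 1).

Let x (m : nat) := a + m%:R * h.

Lemma equispaced_node_prod_ge (k : 'I_L.+1) :
  h ^+ L * L`!%:R <= 2 ^+ L * `|(\prod_(m < L.+1 | m != k) ('X - (x m)%:P)).[x k]|.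
Proof.
have kL : (k <= L)%N by rewrite -ltnS.
have dist m : `|('X - (x m)%:P).[x k]| = `|k%:R - m%:R| * h.
  have -> : ('X - (x m)%:P).[x k] = (k%:R - m%:R) * h by rewrite hornerXsubC /x; ring.
  by rewrite normrM (gtr0_norm h_gt0).
rewrite horner_prod normr_prod (eq_bigr _ (fun (m : 'I_L.+1) _ => dist m)) big_split /=.
rewrite prod_dist_neq_fact // prodr_const cardC1 card_ord /= -(bin_fact kL) natrM.
rewrite mulrCA [_%:R * h ^+ L]mulrC; apply: ler_wpM2r.
  by rewrite mulr_ge0 ?ler0n ?exprn_ge0 ?ltW.
by rewrite -(natrX _ 2) ler_nat bin_le_exp2.
Qed.

Lemma coef_le_equispaced_samples (p : {poly R}) : (size p <= L.+1)%N ->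
  forall j, `|p`_j| <= interpolation_constant L h * \sum_(k < L.+1) `|p.[a + k%:R * h]|.
Proof.
move=> p_small j.
have x_inj : injective x.
  by move=> m m' /addrI /(mulIf (lt0r_neq0 h_gt0)) /eqP; rewrite eqr_nat => /eqP.
have x_le1 (m : 'I_L.+1) : `|x m| <= 1.
  rewrite ger0_norm ?addr_ge0 ?mulr_ge0 ?ler0n ?(ltW h_gt0) //.
  apply: le_trans nodes_le1; rewrite lerD2l; apply: ler_wpM2r; first exact: ltW.
  by rewrite ler_nat -ltnS.
rewrite {1}(lagrange_gen (ltn0Sn L) x_inj p_small) coef_sum mulr_sumr.
apply: le_trans (ler_norm_sum _ _ _) (ler_sum _ _) => k _.
rewrite (lagrangeE (ltn0Sn L) x_inj) /= coefCM coefCM.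
set P := \prod_(_ < _ | _) _.
have P_coef : `|P`_j| <= 2 ^+ L.+1.
  by rewrite -[in leRHS](size_enum_ord L.+1) enumT; apply: coef_prod_XsubC_le.
have P_node := equispaced_node_prod_ge k; rewrite -/P in P_node.
have P_node_gt0 : 0 < `|P.[x k]|.
  rewrite -(pmulr_rgt0 _ (exprn_gt0 L (ltr0n R 2))); apply: lt_le_trans P_node.
  by rewrite mulr_gt0 ?exprn_gt0 ?ltr0n ?fact_gt0.
rewrite normrM mulrC; apply: ler_wpM2r => //; rewrite normrM normfV.
have -> : interpolation_constant L h = 2 ^+ L / (h ^+ L * L`!%:R) * 2 ^+ L.+1.
  by rewrite /interpolation_constant mulrAC -exprD; congr (_ ^+ _ / _); lia.
apply: ler_pM => //; rewrite ?invr_ge0 //.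
by rewrite ler_pdivlMr ?mulr_gt0 ?exprn_gt0 ?ltr0n ?fact_gt0 // mulrC ler_pdivrMr.
Qed.

Lemma sum_sqr_coef_le_equispaced_samples (p : {poly R}) : (size p <= L.+1)%N ->
  \sum_(j < L.+1) p`_j ^+ 2 <=
  L.+1%:R ^+ 2 * interpolation_constant L h ^+ 2 * \sum_(k < L.+1) p.[a + k%:R * h] ^+ 2.
Proof.
move=> p_small; set C := interpolation_constant L h.
have C_ge0 : 0 <= C by apply: interpolation_constant_ge0.
have coef_sqr_le (j : 'I_L.+1) :
    p`_j ^+ 2 <= C ^+ 2 * (L.+1%:R * \sum_(k < L.+1) p.[a + k%:R * h] ^+ 2).
  have := sqr_sum_norm_le (fun k : 'I_L.+1 => p.[a + k%:R * h]).
  rewrite card_ord => /(ler_wpM2l (exprn_ge0 2 C_ge0)); apply: le_trans.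
  rewrite -(real_normK (num_real p`_j)) -exprMn; apply: lerXn2r; rewrite ?nnegrE //.
    by rewrite mulr_ge0 // sumr_ge0.
  exact: coef_le_equispaced_samples.
apply: le_trans (ler_sum _ (fun j _ => coef_sqr_le j)) _.
rewrite sumr_const card_ord -mulr_natl le_eqVlt; apply/orP; left; apply/eqP; ring.
Qed.

End EquispacedInterpolation.

Lemma natrS_exp_le_expR_fact (R : realType) (n : nat) :
  n.+1%:R ^+ n <= expR (1 : R) ^+ n * n`!%:R.
Proof.
elim: n => [|n IH]; first by rewrite !expr0 fact0 mul1r.
have n1_gt0 : (0 : R) < n.+1%:R by rewrite ltr0n.
have step : n.+2%:R ^+ n.+1 <= expR (1 : R) * n.+1%:R ^+ n.+1.
  have -> : n.+2%:R = n.+1%:R * (1 + n.+1%:R^-1) :> R.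
    by rewrite mulrDr mulr1 mulfV ?lt0r_neq0 // -natr1.
  have -> : expR (1 : R) = expR (n.+1%:R^-1) ^+ n.+1.
    by rewrite -expRM_natr mulVf ?lt0r_neq0.
  rewrite exprMn mulrC ler_pM2r ?exprn_gt0 //.
  by apply: lerXn2r; rewrite ?nnegrE ?expR_ge0 ?expR_ge1Dx // addr_ge0 ?invr_ge0 ?ltW.
apply: le_trans step _; rewrite factS natrM exprS [in leRHS]exprS -mulrA.
by rewrite ler_pM2l ?expR_gt0 // mulrCA ler_pM2l.
Qed.

Lemma sum_residue_classes_le (R : realDomainType) (f : nat -> R) (n q M : nat) :
  (forall i, 0 <= f i) -> (n * q <= M)%N ->
  \sum_(r < q) \sum_(k < n) f (k * q + r)%N <= \sum_(i < M) f i.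
Proof.
move=> f_ge0 nq_le_M.
have blocks m : \sum_(0 <= i < m * q) f i = \sum_(k < m) \sum_(r < q) f (k * q + r)%N.
  elim: m => [|m IH]; first by rewrite mul0n big_geq // big_ord0.
  rewrite big_ord_recr /= -IH mulSn addnC (big_cat_nat _ (leq_addr _ _)) //=.
  congr (_ + _); rewrite -{1}[(m * q)%N]add0n big_addn addKn big_mkord.
  by apply: eq_bigr => r _; rewrite addnC.
rewrite exchange_big /= -blocks -(big_mkord xpredT).
by rewrite (@big_cat_nat _ _ _ (n * q) 0 M) //= lerDl sumr_ge0.
Qed.

Lemma interpolation_constant_le (R : realType) (L : nat) (h : R) :
  0 < h -> 1 <= 2 * L.+1%:R * h ->
  interpolation_constant L h <= 2 * 8 ^+ L * expR 1 ^+ L.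
Proof.
move=> h_gt0 nh_ge1; rewrite /interpolation_constant ler_pdivrMr ?mulr_gt0 ?exprn_gt0 ?ltr0n ?fact_gt0 //.
have -> : 2 ^+ (2 * L + 1) = 2 * 4 ^+ L :> R by rewrite addn1 exprS exprM -natrX.
have -> : 2 * 8 ^+ L * expR 1 ^+ L * (h ^+ L * L`!%:R) =
    2 * 4 ^+ L * ((2 * h) ^+ L * (expR 1 ^+ L * L`!%:R)) :> R.
  by rewrite exprMn (_ : 8 = 4 * 2 :> R) ?exprMn; [ring | rewrite -natrM].
apply: ler_peMr; first by rewrite mulr_ge0 ?exprn_ge0.
apply: le_trans (exprn_ege1 L nh_ge1) _.
rewrite mulrAC exprMn; apply: ler_wpM2l; first by rewrite exprn_ge0 ?mulr_ge0 ?ltW.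
exact: natrS_exp_le_expR_fact.
Qed.

(* The samples of index k * q + r, k <= L, form an equispaced grid of step q / M. *)
Lemma sum_sqr_coef_le_residue_class (R : realFieldType) (L M q r : nat) (p : {poly R}) :
  (L.+1 * q <= M)%N -> (r < q)%N -> (size p <= L.+1)%N ->
  \sum_(j < L.+1) p`_j ^+ 2 <=
  L.+1%:R ^+ 2 * interpolation_constant L (q%:R / M%:R) ^+ 2 *
    \sum_(k < L.+1) p.[(k * q + r).+1%:R / M%:R] ^+ 2.
Proof.
move=> nq_le_M r_lt_q p_small; set h : R := q%:R / M%:R.
have M_gt0 : (0 : R) < M%:R by rewrite ltr0n; apply: leq_trans nq_le_M; nia.
have h_gt0 : 0 < h by rewrite divr_gt0 // ltr0n; lia.
have r_ge0 : (0 : R) <= r.+1%:R / M%:R by rewrite divr_ge0 ?ler0n.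
have node_of k : r.+1%:R / M%:R + k%:R * h = (k * q + r).+1%:R / M%:R.
  by rewrite /h -!natr1 natrD natrM; field; rewrite lt0r_neq0.
have nodes_le1 : r.+1%:R / M%:R + L%:R * h <= 1.
  by rewrite node_of ler_pdivrMr // mul1r ler_nat; apply: leq_trans nq_le_M; nia.
apply: le_trans (sum_sqr_coef_le_equispaced_samples h_gt0 r_ge0 nodes_le1 _ p_small) _.
by under eq_bigr do rewrite node_of.
Qed.

Definition sample_constant (R : realType) (L : nat) : R :=
  8 * L.+1%:R ^+ 3 * 64 ^+ L * expR 1 ^+ (2 * L).

Lemma sum_sqr_coef_le_sum_sqr_samples (R : realType) (L M : nat) (p : {poly R}) :
  (L.+1 <= M)%N -> (size p <= L.+1)%N ->
  M%:R * \sum_(j < L.+1) p`_j ^+ 2 <=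
  sample_constant R L * \sum_(i < M) p.[i.+1%:R / M%:R] ^+ 2.
Proof.
move=> LM p_small; set n := L.+1; set q := (M %/ n)%N; set h : R := q%:R / M%:R.
have q_gt0 : (0 < q)%N by rewrite divn_gt0.
have nq_le_M : (n * q <= M)%N by rewrite mulnC leq_divM.
have M_le : (M <= 2 * n * q)%N.
  by have := divn_eq M n; have := ltn_pmod M (ltn0Sn L); rewrite -/q; nia.
have M_gt0 : (0 : R) < M%:R by rewrite ltr0n; apply: leq_trans LM.
have h_gt0 : 0 < h by rewrite divr_gt0 // ltr0n.
have nh_ge1 : 1 <= 2 * n%:R * h by rewrite mulrA ler_pdivlMr // mul1r -!natrM ler_nat.
set S := \sum_(j < n) _; set f := fun i : nat => p.[i.+1%:R / M%:R] ^+ 2.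
set C := interpolation_constant L h; have C_ge0 : 0 <= C by apply: interpolation_constant_ge0.
have sum_le : q%:R * S <= n%:R ^+ 2 * C ^+ 2 * \sum_(i < M) f i.
  have -> : q%:R * S = \sum_(r < q) S by rewrite sumr_const card_ord mulr_natl.
  have class_le (r : 'I_q) : S <= n%:R ^+ 2 * C ^+ 2 * \sum_(k < n) f (k * q + r)%N.
    exact: sum_sqr_coef_le_residue_class nq_le_M (ltn_ord r) p_small.
  apply: le_trans (ler_sum _ (fun r _ => class_le r)) _.
  rewrite -mulr_sumr; apply: ler_wpM2l; first by rewrite mulr_ge0 // exprn_ge0.
  by apply: sum_residue_classes_le => // i; apply: sqr_ge0.
have C2_le : C ^+ 2 <= (2 * 8 ^+ L * expR 1 ^+ L) ^+ 2.
  by apply: lerXn2r; rewrite ?nnegrE //; last exact: interpolation_constant_le.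
have T_ge0 : 0 <= \sum_(i < M) f i by rewrite sumr_ge0 // => i _; apply: sqr_ge0.
apply: (@le_trans _ _ (2 * n%:R * (q%:R * S))).
  rewrite mulrA -!natrM; apply: ler_wpM2r; last by rewrite ler_nat.
  by rewrite sumr_ge0 // => j _; apply: sqr_ge0.
apply: le_trans (ler_wpM2l _ sum_le) _; first by rewrite mulr_ge0.
have -> : sample_constant R L =
    2 * n%:R * (n%:R ^+ 2 * (2 * 8 ^+ L * expR 1 ^+ L) ^+ 2).
  have e64 : 64 = 8 ^+ 2 :> R by rewrite -natrX.
  by rewrite /sample_constant -/n e64 exprAC mulnC exprM; ring.
rewrite -[leRHS]mulrA; apply: ler_wpM2l; first by rewrite mulr_ge0.
apply: ler_wpM2r => //; apply: ler_wpM2l => //; exact: exprn_ge0.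
Qed.

Lemma sum_sqr_scaled_Bbar_mul (R : realType) (M L : nat) (v : 'rV[R]_L.+1) :
  \sum_i (v *m ((Num.sqrt M%:R)^-1 *: Bbar R M L)^T) 0 i ^+ 2 =
  M%:R^-1 * \sum_(i < M) (rVpoly v).[i.+1%:R / M%:R] ^+ 2.
Proof.
rewrite mulr_sumr; apply: eq_bigr => i _.
have -> : (v *m ((Num.sqrt M%:R)^-1 *: Bbar R M L)^T) 0 i =
    (Num.sqrt M%:R)^-1 * (rVpoly v).[i.+1%:R / M%:R].
  rewrite mxE (horner_coef_wide _ (size_poly _ _)) mulr_sumr.
  by apply: eq_bigr => j _; rewrite coef_rVpoly_ord !mxE; ring.
by rewrite exprMn exprVn sqr_sqrtr ?ler0n.
Qed.

Lemma sigma_min_scaled_Bbar_ge (R : realType) {L M : nat} : (L.+1 <= M)%N ->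
  Num.sqrt (sample_constant R L)^-1 <=
  sigma_min ((Num.sqrt (M%:R : R))^-1 *: Bbar R M L).
Proof.
move=> LM; have M_gt0 : (0 : R) < M%:R by rewrite ltr0n; apply: leq_trans LM.
have K_gt0 : 0 < sample_constant R L by rewrite !mulr_gt0 ?exprn_gt0 ?expR_gt0.
apply: sigma_min_ge => [|v]; first exact: sqrtr_ge0.
rewrite sqr_sqrtr ?invr_ge0 ?(ltW K_gt0) // sum_sqr_scaled_Bbar_mul.
rewrite ler_pdivlMl // mulrCA ler_pdivrMl //.
under eq_bigr do rewrite -coef_rVpoly_ord.
exact: sum_sqr_coef_le_sum_sqr_samples (size_poly _ _).
Qed.

Lemma powR_le_expn (R : realType) (x y r : R) (n : nat) :
  0 < x <= 1 -> x <= y -> n%:R <= r -> x `^ r <= y ^+ n.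
Proof.
move=> /andP [x_gt0 x_le1] x_le_y n_le_r.
apply: le_trans (ger_powR _ n_le_r) _; first by rewrite x_gt0.
rewrite powR_mulrn; last exact: ltW.
by apply: lerXn2r; rewrite ?nnegrE // ltW // (lt_le_trans x_gt0).
Qed.

Lemma sqr_constant_le_inv_sample_constant (R : realType) (L : nat) : (1 <= L)%N ->
  ((2 / expR 1) ^+ L / (L%:R ^+ 2 * 2 ^+ (7 * L) * (2 * L%:R + 1))) ^+ 2 <=
  (sample_constant R L)^-1.
Proof.
move=> L_ge1; set e : R := expR 1; set l : R := L%:R; set u : R := 2 ^+ L.
have e_gt0 : 0 < e by apply: expR_gt0.
have l_ge1 : 1 <= l by rewrite ler1n.
have u_ge2 : 2 <= u by rewrite /u -natrX ler_nat -{1}(expn0 2) ltn_exp2l.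
have -> : sample_constant R L = 8 * (l + 1) ^+ 3 * u ^+ 6 * (e ^+ L) ^+ 2.
  rewrite /sample_constant -[L.+1%:R]natr1 -/l -/e mulnC exprM; congr (_ * _ * _).
  by rewrite /u exprAC; congr (_ ^+ _); rewrite -natrX.
have u7 : 2 ^+ (7 * L) = u ^+ 7 :> R by rewrite mulnC exprM.
rewrite u7 [(2 / e) ^+ L]expr_div_n -/u -[leRHS]div1r.
rewrite ler_pdivlMr; last by rewrite !mulr_gt0 ?exprn_gt0 //; lra.
have -> : (u / e ^+ L / (l ^+ 2 * u ^+ 7 * (2 * l + 1))) ^+ 2 *
    (8 * (l + 1) ^+ 3 * u ^+ 6 * (e ^+ L) ^+ 2) =
    8 * (l + 1) ^+ 3 / (l ^+ 4 * u ^+ 6 * (2 * l + 1) ^+ 2).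
  field; rewrite ?expf_neq0 ?lt0r_neq0 //; lra.
rewrite ler_pdivrMr ?mul1r; last by rewrite !mulr_gt0 ?exprn_gt0 //; lra.
have u6 : 64 <= u ^+ 6.
  rewrite (_ : 64 = 2 ^+ 6); last by rewrite -natrX.
  by apply: lerXn2r; rewrite ?nnegrE //; lra.
have l3 : (l + 1) ^+ 3 <= 8 * l ^+ 4.
  have : (l + 1) ^+ 3 <= (2 * l) ^+ 3 by apply: lerXn2r; rewrite ?nnegrE; lra.
  move/le_trans; apply; rewrite exprMn.
  have : 0 <= l ^+ 3 by rewrite exprn_ge0 //; lra.
  nra.
have q1 : 1 <= (2 * l + 1) ^+ 2 by rewrite exprn_ege1 //; lra.
have l4_ge0 : 0 <= l ^+ 4 by rewrite exprn_ge0 //; lra.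
apply: (@le_trans _ _ (l ^+ 4 * 64)); first lra.
rewrite -mulrA; apply: ler_wpM2l => //; nra.
Qed.

Lemma lemma2_bound_le_inv_sqrt_sample_constant (R : realType) (L M : nat) :
  (1 <= L)%N -> (L.+1 <= M)%N ->
  (1 / ((L%:R : R) ^+ 2 * 2 ^+ (7 * L) * (2 * L%:R + 1))) *
    powR (((M + L)%:R) / (expR 1 * M%:R)) (L%:R + 1 / 2) <=
  Num.sqrt (sample_constant R L)^-1.
Proof.
move=> hL hM; set D : R := L%:R ^+ 2 * _ * _; set X : R := _ / (expR 1 * _).
have D_gt0 : 0 < D by rewrite !mulr_gt0 ?exprn_gt0 ?ltr0n // addr_gt0 ?mulr_gt0 ?ltr0n.
have M_gt0 : (0 : R) < M%:R by rewrite ltr0n; apply: leq_trans hM.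
have e_ge2 : 2 <= expR (1 : R) by have := expR_ge1Dx (1 : R).
have X_gt0 : 0 < X by rewrite divr_gt0 ?mulr_gt0 ?expR_gt0 // ltr0n addn_gt0 hL orbT.
have X_le : X <= 2 / expR 1.
  rewrite ler_pdivrMr ?mulr_gt0 ?expR_gt0 // mulrA divfK ?gt_eqF ?expR_gt0 //.
  by rewrite -natrM ler_nat; lia.
have X_le1 : X <= 1 by apply: le_trans X_le _; rewrite ler_pdivrMr ?expR_gt0 // mul1r.
apply: (@le_trans _ _ ((2 / expR 1) ^+ L / D)).
  rewrite div1r mulrC; apply: ler_wpM2r; first by rewrite invr_ge0 ltW.
  by apply: powR_le_expn; rewrite ?X_gt0 ?lerDl.
have c_ge0 : 0 <= (2 / expR 1) ^+ L / D.
  by rewrite divr_ge0 ?exprn_ge0 ?divr_ge0 ?expR_ge0 // ltW.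
rewrite -(ger0_norm c_ge0) -sqrtr_sqr ler_wsqrtr //.
exact: sqr_constant_le_inv_sample_constant.
Qed.

Theorem lemma2 (R : realType) (L M : nat) (hL : (1 <= L)%N) (hM : (L.+1 <= M)%N) :
  sigma_min ((Num.sqrt (M%:R : R))^-1 *: Bbar R M L) >=
  (1 / ((L%:R : R) ^+ 2 * 2 ^+ (7 * L) * (2 * L%:R + 1))) *
  powR (((M + L)%:R) / (expR 1 * M%:R)) (L%:R + 1 / 2).
Proof.
apply: le_trans (sigma_min_scaled_Bbar_ge R hM).
exact: lemma2_bound_le_inv_sqrt_sample_constant.
Qed.
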